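(* Fix any $H\ge2$. For any offline algorithm $\mathrm{Algo}$ (mapping datasets to policies) and any coefficients $\{\kappa_h\}_{h\ge1}$ with $\kappa_h\ge2$, there exist a linear MDP $\mathcal{M}=(\mathcal{S},\mathcal{A},H,\mathbb{P},r,d_0)$ with positive minimum sub-optimality gap $\Delta_{\min}>0$ and a behavior policy $\mu$ generating a dataset $\mathcal{D}=\{(s_h^t,a_h^t,r_h^t)\}_{h\in[H]}^{t\in[K]}\sim\mathcal{P}(\cdot\mid\mathcal{M},\mu)$ with $\sup_{s_h,a_h}\frac{d^{\mathcal{M},*}_h(s_h,a_h)}{d^{\mathcal{M},\mu}_h(s_h,a_h)}\le\kappa_h$ for all $h\in[H]$, such that \[ \mathbb{E}_{\mathcal{D}\sim\mathcal{M}}[\mathrm{SubOpt}(\mathrm{Algo}(\mathcal{D});\mathcal{M})]=\Omega\Big(\frac{\kappa_{\min}H^2}{K\Delta_{\min}}\Big), \] where $\kappa_{\min}=\min\{\kappa_h:h\in[H]\}$.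
   Context: Episodic MDP with horizon $H$, initial distribution $d_0$, transitions $\mathbb{P}_h$, mean rewards $r_h\in[0,1]$. For a policy $\pi$, $V^\pi_h,Q^\pi_h$ are its value functions and $V^*,Q^*$ the optimal ones; $d^{\mathcal{M},\pi}_h(s,a)$ is the state-action visitation density at step $h$ under $\pi$ in $\mathcal{M}$, and $d^{\mathcal{M},*}_h$ that of an optimal policy. $\mathrm{SubOpt}(\pi;\mathcal{M})=\mathbb{E}_{s\sim d_0}[V^*_1(s)-V^\pi_1(s)]$. Linear MDP: there are known features $\phi_h:\mathcal{S}\times\mathcal{A}\to\mathbb{R}^d$, $\|\phi_h\|_2\le1$, with $r_h(s,a)=\phi_h(s,a)^T\theta_h$ and $\mathbb{P}_h(s'|s,a)=\phi_h(s,a)^T\mu_h(s')$. Sub-optimality gaps $\Delta_h(s,a)=V^*_h(s)-Q^*_h(s,a)$, $\Delta_{\min}=\min_{s,a,h}\{\Delta_h(s,a):\Delta_h(s,a)\neq0\}$. The dataset consists of $K$ episodes of trajectories generated by running $\mu$ in $\mathcal{M}$. *)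

From HB Require Import structures.
From mathcomp Require Import all_boot all_order all_algebra.
From mathcomp Require Import reals.
Set Implicit Arguments. Unset Strict Implicit. Unset Printing Implicit Defensive.
Import Order.TTheory GRing.Theory Num.Theory.
Local Open Scope ring_scope.

(* Steps are 0-indexed: step h of the paper is h+1 here, h < H. *)

Definition is_dist {R : realType} {T : finType} (p : T -> R) : Prop :=
  (forall x, 0 <= p x) /\ \sum_x p x = 1.

(* (possibly stochastic, non-stationary) policy: pi h s a = pi_h(a|s) *)
Definition policy (R : realType) (S A : finType) := nat -> S -> A -> R.

Definition is_policy {R : realType} {S A : finType} (H : nat) (pi : policy R S A) :=
  forall h, (h < H)%N -> forall s, is_dist (pi h s).

(* An episodic MDP with finitely-supported reward noise: observed reward at
   (h,s,a) is rval o with o ~ rdist h s a. *)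
Record mdp (R : realType) (S A O : finType) := Mdp {
  d0 : S -> R;
  trans : nat -> S -> A -> S -> R;   (* trans h s a s' = P_h(s'|s,a) *)
  rdist : nat -> S -> A -> O -> R;
  rval : O -> R }.

Definition rmean {R : realType} {S A O : finType} (M : mdp R S A O) h s a : R :=
  \sum_o rdist M h s a o * rval M o.

Definition is_mdp {R : realType} {S A O : finType} (H : nat) (M : mdp R S A O) :=
  [/\ is_dist (d0 M),
      (forall h, (h < H)%N -> forall s a, is_dist (trans M h s a)),
      (forall h, (h < H)%N -> forall s a, is_dist (rdist M h s a)) &
      (forall o, 0 <= rval M o <= 1)].

Definition dotv {R : realType} {d : nat} (x y : 'rV[R]_d) : R :=
  \sum_(i < d) x 0 i * y 0 i.

Definition is_linear_mdp {R : realType} {S A O : finType} (H d : nat)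
    (M : mdp R S A O) (phi : nat -> S -> A -> 'rV[R]_d) :=
  is_mdp H M /\
  (forall h, (h < H)%N -> forall s a, dotv (phi h s a) (phi h s a) <= 1) /\
  exists (theta : nat -> 'rV[R]_d) (mu : nat -> S -> 'rV[R]_d),
    forall h, (h < H)%N -> forall s a,
      rmean M h s a = dotv (phi h s a) (theta h) /\
      forall s', trans M h s a s' = dotv (phi h s a) (mu h s').

(* V^pi with n remaining steps starting at step h: V^pi_h = Vpi pi (H-h) h *)
Fixpoint Vpi {R : realType} {S A O : finType} (M : mdp R S A O)
    (pi : policy R S A) (n h : nat) (s : S) : R :=
  match n with
  | 0 => 0
  | n'.+1 => \sum_a pi h s a *
       (rmean M h s a + \sum_s' trans M h s a s' * Vpi M pi n' h.+1 s')
  end.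

(* Optimal values by backward induction (Bellman optimality).  The max is
   seeded with 0, which is harmless since mean rewards are >= 0. *)
Fixpoint Vstar {R : realType} {S A O : finType} (M : mdp R S A O)
    (n h : nat) (s : S) : R :=
  match n with
  | 0 => 0
  | n'.+1 => \big[Num.max/0]_a
       (rmean M h s a + \sum_s' trans M h s a s' * Vstar M n' h.+1 s')
  end.

Definition Qstar {R : realType} {S A O : finType} (M : mdp R S A O)
    (H h : nat) (s : S) (a : A) : R :=
  rmean M h s a + \sum_s' trans M h s a s' * Vstar M (H - h.+1) h.+1 s'.

Definition gap {R : realType} {S A O : finType} (M : mdp R S A O)
    (H h : nat) (s : S) (a : A) : R :=
  Vstar M (H - h) h s - Qstar M H h s a.

Definition is_min_gap {R : realType} {S A O : finType} (H : nat)
    (M : mdp R S A O) (Dmin : R) :=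
  (exists h s a, (h < H)%N /\ gap M H h s a != 0 /\ gap M H h s a = Dmin) /\
  (forall h s a, (h < H)%N -> gap M H h s a != 0 -> Dmin <= gap M H h s a).

Definition is_optimal {R : realType} {S A O : finType} (H : nat)
    (M : mdp R S A O) (pi : policy R S A) :=
  forall h, (h < H)%N -> forall s, Vpi M pi (H - h) h s = Vstar M (H - h) h s.

Fixpoint socc {R : realType} {S A O : finType} (M : mdp R S A O)
    (pi : policy R S A) (h : nat) (s' : S) : R :=
  match h with
  | 0 => d0 M s'
  | h'.+1 => \sum_s \sum_a socc M pi h' s * pi h' s a * trans M h' s a s'
  end.

Definition visit {R : realType} {S A O : finType} (M : mdp R S A O)
    (pi : policy R S A) (h : nat) (s : S) (a : A) : R :=
  socc M pi h s * pi h s a.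

Definition SubOpt {R : realType} {S A O : finType} (H : nat)
    (M : mdp R S A O) (pi : policy R S A) : R :=
  \sum_s d0 M s * (Vstar M H 0 s - Vpi M pi H 0 s).

Definition rawtraj (H : nat) (S A O : finType) := {ffun 'I_H -> S * A * O}.
Definition rawdata (K H : nat) (S A O : finType) := {ffun 'I_K -> rawtraj H S A O}.

(* the step before h (h itself when h = 0; only used for h > 0) *)
Definition prev_step {H : nat} (h : 'I_H) : 'I_H :=
  Ordinal (leq_ltn_trans (leq_pred h) (ltn_ord h)).

Definition traj_prob {R : realType} {S A O : finType} (H : nat)
    (M : mdp R S A O) (mu : policy R S A) (tau : rawtraj H S A O) : R :=
  \prod_(h < H)
    let: (s, a, o) := tau h in
    (if h == 0 :> nat then d0 M s
     else let: (sp, ap, _) := tau (prev_step h) in trans M h.-1 sp ap s)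
    * mu h s a * rdist M h s a o.

Definition data_prob {R : realType} {S A O : finType} (K H : nat)
    (M : mdp R S A O) (mu : policy R S A) (D : rawdata K H S A O) : R :=
  \prod_(t < K) traj_prob M mu (D t).

Definition dataset (R : realType) (K H : nat) (S A : Type) :=
  'I_K -> 'I_H -> S * A * R.

Definition observe {R : realType} {S A O : finType} {K H : nat}
    (M : mdp R S A O) (D : rawdata K H S A O) : dataset R K H S A :=
  fun t h => let: (s, a, o) := D t h in (s, a, rval M o).

Definition algo (R : realType) (K H : nat) :=
  forall (nS nA d : nat), (nat -> 'I_nS -> 'I_nA -> 'rV[R]_d) ->
    dataset R K H 'I_nS 'I_nA -> policy R 'I_nS 'I_nA.

Definition valid_algo {R : realType} {K H : nat} (Alg : algo R K H) :=
  forall nS nA d phi D, is_policy H (@Alg nS nA d phi D).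

Definition expected_subopt {R : realType} {nS nA : nat} {O : finType} {d K H : nat}
    (Alg : algo R K H) (M : mdp R 'I_nS 'I_nA O)
    (phi : nat -> 'I_nS -> 'I_nA -> 'rV[R]_d) (mu : policy R 'I_nS 'I_nA) : R :=
  \sum_(D : rawdata K H 'I_nS 'I_nA O)
     data_prob M mu D * SubOpt H M (@Alg nS nA d phi (observe M D)).

Definition kappa_min {R : realType} (H : nat) (kappa : nat -> R) : R :=
  \big[Num.min/kappa 0%N]_(h < H) kappa h.

From HB Require Import structures.
From mathcomp Require Import all_boot all_order all_algebra.
From mathcomp Require Import reals.
From mathcomp Require Import ring lra zify.
Set Implicit Arguments. Unset Strict Implicit. Unset Printing Implicit Defensive.
Import Order.TTheory GRing.Theory Num.Theory.
Local Open Scope ring_scope.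

(* A two-point (Le Cam) argument.  Two tabular, hence linear, MDPs differ only
   at the root action [a0] at step 0: in one it starts a chain paying 1 per
   step, in the other a chain paying 0, against 1/2 per step for [a1].  The
   optimal root actions therefore disagree, and the minimal gap is
   Delta = (L + 1) / 2, of order H, in both.  The root is reached with
   probability q = kappa / (2K) and the behaviour policy plays [a0] there with
   probability 1 / kappa, which keeps the concentrability within kappa, so an
   episode tells the two instances apart only with probability 1 / (2K); with
   probability at least 1/2 no episode among K does.  On such datasets the two
   laws coincide, the algorithm returns one policy for both instances, and its
   suboptimalities add up to at least q Delta.  One instance thus has expected
   suboptimality at least q Delta / 4 = kappa Delta / (8 K), which is of order
   kappa H^2 / (K Delta). *)

Section Distributions.
Variable R : realType.

Lemma convex_sum_le (I : finType) (p F : I -> R) (c : R) :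
  is_dist p -> (forall i, F i <= c) -> \sum_i p i * F i <= c.
Proof.
move=> [p_ge0 p_sum1] F_le_c; apply: (@le_trans _ _ (\sum_i p i * c)).
  by apply: ler_sum => i _; apply: ler_wpM2l.
by rewrite -mulr_suml p_sum1 mul1r.
Qed.

Definition dirac (I : finType) (t : I) : I -> R := fun i => (i == t)%:R.

Lemma sum_dirac_mul (I : finType) (t : I) (F : I -> R) :
  \sum_i dirac t i * F i = F t.
Proof.
rewrite (bigD1 t) //= /dirac eqxx mul1r big1 ?addr0 // => i /negbTE ->.
by rewrite mul0r.
Qed.

Lemma dirac_dist (I : finType) (t : I) : is_dist (dirac t).
Proof.
split=> [i|]; first by rewrite ler0n.
by rewrite -(sum_dirac_mul t (fun=> 1)); apply: eq_bigr => i _; rewrite mulr1.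
Qed.

Lemma dist_le1 (I : finType) (p : I -> R) i : is_dist p -> 0 <= p i <= 1.
Proof.
move=> [p_ge0 p_sum1]; rewrite p_ge0 -p_sum1 (bigD1 i) //= lerDl.
by apply: sumr_ge0.
Qed.

Lemma sum_pair (I J : finType) (F : I * J -> R) :
  \sum_p F p = \sum_i \sum_j F (i, j).
Proof. by rewrite pair_bigA; apply: eq_bigr => -[]. Qed.

Lemma bernoulli_ineq (x : R) n : 0 <= x <= 1 -> 1 - n%:R * x <= (1 - x) ^+ n.
Proof.
move=> /andP [x_ge0 x_le1]; elim: n => [|n IHn]; first by rewrite expr0 mul0r subr0.
have : 0 <= (1 - x) ^+ n by apply: exprn_ge0; lra.
rewrite exprS -natr1; have : 0 <= n%:R :> R by [].
nra.
Qed.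

End Distributions.

Section BellmanOptimality.
Variables (R : realType) (S A O : finType) (M : mdp R S A O).

Lemma Qstar_le_Vstar H h s a : (h < H)%N -> Qstar M H h s a <= Vstar M (H - h) h s.
Proof.
move=> hH; rewrite (_ : (H - h = (H - h.+1).+1)%N); last first.
  by rewrite subnS prednK // subn_gt0.
exact: (le_bigmax _ (fun a => _) a).
Qed.

Lemma gap_ge0 H h s a : (h < H)%N -> 0 <= gap M H h s a.
Proof. by move=> hH; rewrite subr_ge0 Qstar_le_Vstar. Qed.

Variable H : nat.
Hypothesis HM : is_mdp H M.

Lemma Vpi_le_Vstar pi : is_policy H pi ->
  forall n h s, (h + n <= H)%N -> Vpi M pi n h s <= Vstar M n h s.
Proof.
case: HM => _ trans_dist _ _ pi_dist; elim=> [|n IHn] h s hn //=.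
have hH : (h < H)%N by lia.
apply: convex_sum_le; first exact: pi_dist.
move=> a; apply: le_trans (le_bigmax _ (fun a => _) a).
rewrite lerD2l; apply: ler_sum => s' _.
have [trans_ge0 _] := trans_dist h hH s a.
by apply: ler_wpM2l => //; apply: IHn; rewrite addSnnS.
Qed.

Lemma expected_gap_le_subopt pi h s : is_policy H pi -> (h < H)%N ->
  \sum_a pi h s a * gap M H h s a <= Vstar M (H - h) h s - Vpi M pi (H - h) h s.
Proof.
move=> pi_dist hH; have [pi_ge0 pi_sum1] := pi_dist h hH s.
have [_ trans_dist _ _] := HM.
have -> : \sum_a pi h s a * gap M H h s a =
          Vstar M (H - h) h s - \sum_a pi h s a * Qstar M H h s a.
  rewrite /gap; under eq_bigr do rewrite mulrBr.
  by rewrite sumrB -mulr_suml pi_sum1 mul1r.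
rewrite lerD2l lerN2 (_ : (H - h = (H - h.+1).+1)%N) /=; last first.
  by rewrite subnS prednK // subn_gt0.
apply: ler_sum => a _; apply: ler_wpM2l => //.
rewrite /Qstar lerD2l; apply: ler_sum => s' _.
have [trans_ge0 _] := trans_dist h hH s a.
by apply: ler_wpM2l => //; apply: Vpi_le_Vstar => //; lia.
Qed.

Lemma optimal_policy_avoids_gap pi h s a :
  is_policy H pi -> is_optimal H M pi -> (h < H)%N ->
  gap M H h s a != 0 -> pi h s a = 0.
Proof.
move=> pi_dist pi_opt hH gap_neq0; have [pi_ge0 _] := pi_dist h hH s.
have terms_ge0 b : 0 <= pi h s b * gap M H h s b by rewrite mulr_ge0 ?gap_ge0.
have sum_eq0 : \sum_b pi h s b * gap M H h s b = 0.
  apply/eqP; rewrite eq_le sumr_ge0 // andbT.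
  by have := expected_gap_le_subopt s pi_dist hH; rewrite pi_opt // subrr.
move/psumr_eq0P: sum_eq0 => /(_ (fun b _ => terms_ge0 b) a isT) /eqP.
by rewrite mulf_eq0 (negbTE gap_neq0) orbF => /eqP.
Qed.

Lemma SubOpt_ge_root_gap pi s0 : is_policy H pi -> (0 < H)%N ->
  d0 M s0 * \sum_a pi 0%N s0 a * gap M H 0 s0 a <= SubOpt H M pi.
Proof.
move=> pi_dist H_gt0; have [[d0_ge0 _] _ _ _] := HM.
have loss_ge0 s : 0 <= d0 M s * (Vstar M H 0 s - Vpi M pi H 0 s).
  by rewrite mulr_ge0 // subr_ge0 Vpi_le_Vstar.
rewrite /SubOpt (bigD1 s0) //= -[X in X <= _]addr0.
apply: lerD; last by apply: sumr_ge0.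
apply: ler_wpM2l => //.
by have := expected_gap_le_subopt s0 pi_dist H_gt0; rewrite subn0.
Qed.

Lemma SubOpt_ge0 pi : is_policy H pi -> 0 <= SubOpt H M pi.
Proof.
move=> pi_dist; have [[d0_ge0 _] _ _ _] := HM.
by apply: sumr_ge0 => s _; rewrite mulr_ge0 // subr_ge0 Vpi_le_Vstar.
Qed.

End BellmanOptimality.

Definition tabular_features (R : realType) (S A : finType) (h : nat) (s : S) (a : A)
  : 'rV[R]_#|{: S * A}| := \row_j dirac R (enum_rank (s, a)) j.

Lemma tabular_linear_mdp (R : realType) (S A O : finType) (H : nat) (M : mdp R S A O) :
  is_mdp H M -> is_linear_mdp H M (@tabular_features R S A).
Proof.
move=> HM; split=> //; split.
  move=> h _ s a; rewrite /dotv /tabular_features.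
  under eq_bigr do rewrite !mxE.
  by rewrite sum_dirac_mul /dirac eqxx.
exists (fun h => \row_j rmean M h (enum_val j).1 (enum_val j).2).
exists (fun h s' => \row_j trans M h (enum_val j).1 (enum_val j).2 s').
move=> h _ s a; split; last move=> s';
  rewrite /dotv /tabular_features; under eq_bigr do rewrite !mxE;
  by rewrite sum_dirac_mul enum_rankK.
Qed.

Section MarkovPaths.
Variables (R : realType) (X : finType).

Definition ffun_snoc n (f : {ffun 'I_n.+1 -> X}) (x : X) : {ffun 'I_n.+2 -> X} :=
  [ffun i => if unlift ord_max i is Some j then f j else x].

Lemma widen_ord_lift_max n (i : 'I_n.+1) : widen_ord (leqnSn _) i = lift ord_max i.
Proof. by apply: val_inj; rewrite /= /bump leqNgt ltn_ord. Qed.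

Lemma ffun_snoc_widen n (f : {ffun 'I_n.+1 -> X}) x i :
  ffun_snoc f x (widen_ord (leqnSn _) i) = f i.
Proof. by rewrite widen_ord_lift_max ffunE liftK. Qed.

Lemma ffun_snoc_last n (f : {ffun 'I_n.+1 -> X}) x : ffun_snoc f x ord_max = x.
Proof. by rewrite ffunE unlift_none. Qed.

Lemma sum_ffun_snoc n (G : {ffun 'I_n.+2 -> X} -> R) :
  \sum_tau G tau = \sum_f \sum_x G (ffun_snoc f x).
Proof.
rewrite pair_bigA (reindex (fun p => ffun_snoc p.1 p.2)) //=.
exists (fun tau => ([ffun j => tau (widen_ord (leqnSn _) j)], tau ord_max)).
  move=> [f x] _; congr pair; last exact: ffun_snoc_last.
  by apply/ffunP => j; rewrite ffunE ffun_snoc_widen.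
move=> tau _; apply/ffunP => i; rewrite ffunE.
by case: unliftP => [j ->|->] //; rewrite ffunE widen_ord_lift_max.
Qed.

Lemma prev_step_widen n (i : 'I_n.+1) :
  prev_step (widen_ord (leqnSn n.+1) i) = widen_ord (leqnSn _) (prev_step i).
Proof. exact: val_inj. Qed.

Lemma sum_markov_paths n (p0 : X -> R) (k : nat -> X -> X -> R) :
  (forall i x, (i < n)%N -> \sum_y k i x y = 1) ->
  \sum_(tau : {ffun 'I_n.+1 -> X})
     \prod_(i < n.+1) (if i == 0 :> nat then p0 (tau i)
                       else k i.-1 (tau (prev_step i)) (tau i)) = \sum_x p0 x.
Proof.
elim: n => [|n IHn] k_sum1.
  rewrite (reindex (fun x => [ffun=> x])) /=; last first.
    exists (fun tau : {ffun 'I_1 -> X} => tau ord0) => [x _|tau _]; first by rewrite ffunE.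
    by apply/ffunP => i; rewrite ffunE [i]ord1.
  by apply: eq_bigr => x _; rewrite big_ord1 ffunE.
rewrite sum_ffun_snoc -IHn; last by move=> i x hi; apply: k_sum1; apply: ltnW.
apply: eq_bigr => f _.
under eq_bigr do rewrite big_ord_recr /=.
have -> : prev_step (@ord_max n.+1) = widen_ord (leqnSn _) (@ord_max n) by apply: val_inj.
under eq_bigr => x _.
  rewrite ffun_snoc_last ffun_snoc_widen.
  under eq_bigr => i _ do rewrite prev_step_widen !ffun_snoc_widen.
  over.
by rewrite -mulr_sumr k_sum1 // mulr1.
Qed.

End MarkovPaths.

Section Trajectories.
Variables (R : realType) (S A O : finType) (M : mdp R S A O) (mu : policy R S A).

Definition init_prob (x : S * A * O) : R :=
  d0 M x.1.1 * mu 0%N x.1.1 x.1.2 * rdist M 0%N x.1.1 x.1.2 x.2.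

Definition step_prob (i : nat) (y x : S * A * O) : R :=
  trans M i y.1.1 y.1.2 x.1.1 * mu i.+1 x.1.1 x.1.2 * rdist M i.+1 x.1.1 x.1.2 x.2.

Lemma traj_probE n (tau : rawtraj n.+1 S A O) :
  traj_prob M mu tau = \prod_(i < n.+1) (if i == 0 :> nat then init_prob (tau i)
                          else step_prob i.-1 (tau (prev_step i)) (tau i)).
Proof.
apply: eq_bigr => i _.
case: (tau i) => [[s a] o]; case: (tau (prev_step i)) => [[sp ap] op].
rewrite /init_prob /step_prob /=; case: eqP => [->|i_neq0] //.
by rewrite prednK // lt0n; apply/eqP.
Qed.

Variable H : nat.
Hypotheses (HM : is_mdp H M) (Hmu : is_policy H mu).

Lemma traj_prob_ge0 (tau : rawtraj H S A O) : 0 <= traj_prob M mu tau.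
Proof.
have [[d0_ge0 _] trans_dist rdist_dist _] := HM.
apply: prodr_ge0 => h _; case: (tau h) => [[s a] o].
have [mu_ge0 _] := Hmu (ltn_ord h) s; have [rdist_ge0 _] := rdist_dist h (ltn_ord h) s a.
rewrite !mulr_ge0 //; case: ifP => // _; case: (tau (prev_step h)) => [[sp ap] _].
by have [] := trans_dist h.-1 (leq_ltn_trans (leq_pred h) (ltn_ord h)) sp ap.
Qed.

Lemma data_prob_ge0 K (D : rawdata K H S A O) : 0 <= data_prob M mu D.
Proof. by apply: prodr_ge0 => t _; apply: traj_prob_ge0. Qed.

End Trajectories.

Lemma sum_step_prob (R : realType) (S A O : finType) n (M : mdp R S A O) mu i x :
  is_mdp n.+1 M -> is_policy n.+1 mu -> (i < n)%N -> \sum_y step_prob M mu i x y = 1.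
Proof.
case=> _ trans_dist rdist_dist _ mu_dist hi.
rewrite (sum_pair (fun y => step_prob M mu i x y)) /=.
rewrite (sum_pair (fun sa => \sum_j step_prob M mu i x (sa, j))) /=.
have [_ <-] := trans_dist i (ltnW hi) x.1.1 x.1.2.
apply: eq_bigr => s _; have [_ mu_sum1] := mu_dist i.+1 hi s.
rewrite -[RHS]mulr1 -mu_sum1 mulr_sumr; apply: eq_bigr => a _.
have [_ rdist_sum1] := rdist_dist i.+1 hi s a.
by rewrite /step_prob /= -!mulr_sumr rdist_sum1 mulr1.
Qed.

Lemma sum_traj_prob_first (R : realType) (S A O : finType) n (M : mdp R S A O) mu
    (g : S * A * O -> R) :
  is_mdp n.+1 M -> is_policy n.+1 mu ->
  \sum_(tau : rawtraj n.+1 S A O) g (tau ord0) * traj_prob M mu tau =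
  \sum_x g x * init_prob M mu x.
Proof.
move=> HM Hmu.
rewrite -(@sum_markov_paths R _ n (fun x => g x * init_prob M mu x) (step_prob M mu));
  last by move=> i x hi; apply: sum_step_prob HM Hmu hi.
by apply: eq_bigr => tau _; rewrite traj_probE !big_ord_recl /= mulrA.
Qed.

Section TwoPointMethod.
Variables (R : realType) (nS nA : nat) (O : finType) (d n : nat).
Let S := 'I_nS.
Let A := 'I_nA.
Variables (M1 M2 : mdp R S A O) (phi : nat -> S -> A -> 'rV[R]_d) (mu : policy R S A).
Hypotheses (HM1 : is_mdp n.+1 M1) (HM2 : is_mdp n.+1 M2) (Hmu : is_policy n.+1 mu).
Hypothesis same_rval : rval M1 = rval M2.
Variable hidden : pred (S * A * O).
Hypothesis same_traj_prob : forall tau : rawtraj n.+1 S A O,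
  hidden (tau ord0) -> traj_prob M1 mu tau = traj_prob M2 mu tau.

Let hidden_prob : R := \sum_x (hidden x)%:R * init_prob M1 mu x.

Lemma data_prob_hidden K : hidden_prob ^+ K =
  \sum_(D : rawdata K n.+1 S A O) \prod_t ((hidden (D t ord0))%:R * traj_prob M1 mu (D t)).
Proof.
rewrite /hidden_prob -(sum_traj_prob_first _ HM1 Hmu).
rewrite -(bigA_distr_bigA (fun (t : 'I_K) (tau : rawtraj n.+1 S A O) =>
  (hidden (tau ord0))%:R * traj_prob M1 mu tau)).
by rewrite prodr_const card_ord.
Qed.

Lemma two_point_lower_bound K (Alg : algo R K n.+1) (c : R) :
  valid_algo Alg ->
  (forall pi, is_policy n.+1 pi -> c <= SubOpt n.+1 M1 pi + SubOpt n.+1 M2 pi) ->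
  c * hidden_prob ^+ K <= expected_subopt Alg M1 phi mu + expected_subopt Alg M2 phi mu.
Proof.
move=> Alg_valid c_le_sum.
rewrite data_prob_hidden mulr_sumr /expected_subopt -big_split /=.
apply: ler_sum => D _.
have -> : observe M2 D = observe M1 D by rewrite /observe same_rval.
set pi := Alg _ _ _ phi _.
have pi_dist : is_policy n.+1 pi by apply: Alg_valid.
have [all_hidden | /forallPn [t not_hidden]] := boolP [forall t, hidden (D t ord0)].
  have -> : \prod_t ((hidden (D t ord0))%:R * traj_prob M1 mu (D t)) = data_prob M1 mu D.
    by apply: eq_bigr => t _; rewrite (forallP all_hidden t) mul1r.
  have -> : data_prob M2 mu D = data_prob M1 mu D.
    by apply: eq_bigr => t _; rewrite same_traj_prob // (forallP all_hidden t).
  by rewrite -mulrDr mulrC ler_wpM2l ?c_le_sum ?(data_prob_ge0 HM1 Hmu).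
rewrite (bigD1 t) //= (negbTE not_hidden) !mul0r mulr0.
by rewrite addr_ge0 // mulr_ge0 ?(data_prob_ge0 HM1 Hmu) ?(data_prob_ge0 HM2 Hmu)
  ?(SubOpt_ge0 HM1) ?(SubOpt_ge0 HM2).
Qed.

End TwoPointMethod.

Definition s_rest : 'I_5 := @Ordinal 5 0 isT.
Definition s_good : 'I_5 := @Ordinal 5 1 isT.
Definition s_bad : 'I_5 := @Ordinal 5 2 isT.
Definition s_trap : 'I_5 := @Ordinal 5 3 isT.
Definition s_root : 'I_5 := @Ordinal 5 4 isT.
Definition a0 : 'I_2 := @Ordinal 2 0 isT.
Definition a1 : 'I_2 := @Ordinal 2 1 isT.
Definition o_zero : 'I_3 := @Ordinal 3 0 isT.
Definition o_half : 'I_3 := @Ordinal 3 1 isT.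
Definition o_one : 'I_3 := @Ordinal 3 2 isT.

Lemma ord5P (P : 'I_5 -> Prop) :
  P s_rest -> P s_good -> P s_bad -> P s_trap -> P s_root -> forall s, P s.
Proof.
by move=> ? ? ? ? ? [[|[|[|[|[|?]]]]] Hs] //; rewrite (bool_irrelevance Hs isT).
Qed.

Lemma ord2P (P : 'I_2 -> Prop) : P a0 -> P a1 -> forall x, P x.
Proof.
by move=> ? ? [[|[|?]] Hx] //; rewrite (bool_irrelevance Hx isT).
Qed.

Lemma sum5 (R : realType) (F : 'I_5 -> R) :
  \sum_s F s = F s_rest + F s_good + F s_bad + F s_trap + F s_root.
Proof.
rewrite !big_ord_recl big_ord0 addr0 !addrA.
by congr (_ + _ + _ + _ + _); congr F; apply: val_inj.
Qed.

Lemma sum2 (R : realType) (F : 'I_2 -> R) : \sum_x F x = F a0 + F a1.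
Proof. by rewrite !big_ord_recl big_ord0 addr0; congr (_ + _); congr F; apply: val_inj. Qed.

Lemma bigmax2 (R : realType) (F : 'I_2 -> R) :
  \big[Num.max/0]_x F x = Num.max (F a0) (Num.max (F a1) 0).
Proof.
by rewrite !big_ord_recl big_ord0; congr (Num.max (F _) (Num.max (F _) _)); apply: val_inj.
Qed.

(* An episode starts at [s_root] with
   probability [q], at [s_rest] otherwise.  At the root (step 0), [a1] pays
   1/2 and leads to [s_rest], while [a0] pays 1 and enters the chain [s_good]
   if [m], and pays 0 and enters the chain [s_bad] otherwise.  Up to step [L],
   [a0] keeps the agent on its chain ([s_good] pays 1, [s_bad] 0, [s_rest] 1/2)
   and [a1] drops it into the absorbing, rewardless [s_trap]; after step [L]
   all non-trap states pay 1/2 and lead to [s_rest].  The two instances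
   differ only at [(s_root, a0)], where the optimal actions disagree. *)
Definition hard_next (m : bool) (L h : nat) (s : 'I_5) (x : 'I_2) : 'I_5 :=
  match val s with
  | 0 => if (h <= L)%N && (val x == 1%N) then s_trap else s_rest
  | 1 => if (h <= L)%N then
           (if val x == 0%N then (if (h < L)%N then s_good else s_rest) else s_trap)
         else s_rest
  | 2 => if (h <= L)%N then
           (if val x == 0%N then (if (h < L)%N then s_bad else s_rest) else s_trap)
         else s_rest
  | 3 => s_trap
  | _ => if h == 0%N then
           (if val x == 0%N then
              (if L == 0%N then s_rest else if m then s_good else s_bad)
            else s_rest)
         else s_rest
  end.

Definition hard_outcome (m : bool) (L h : nat) (s : 'I_5) (x : 'I_2) : 'I_3 :=
  match val s with
  | 0 => if (h <= L)%N && (val x == 1%N) then o_zero else o_half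
  | 1 => if (h <= L)%N then (if val x == 0%N then o_one else o_zero) else o_half
  | 2 => if (h <= L)%N then o_zero else o_half
  | 3 => o_zero
  | _ => if h == 0%N then
           (if val x == 0%N then (if m then o_one else o_zero) else o_half)
         else o_half
  end.

Definition reward_of (R : realType) (o : 'I_3) : R := (val o)%:R / 2.

Definition hard_init (R : realType) (q : R) (s : 'I_5) : R :=
  if val s == 0%N then 1 - q else if val s == 4%N then q else 0.

Definition hard_mdp (R : realType) (m : bool) (L : nat) (q : R) : mdp R 'I_5 'I_2 'I_3 :=
  Mdp (hard_init q) (fun h s x => dirac R (hard_next m L h s x))
      (fun h s x => dirac R (hard_outcome m L h s x)) (@reward_of R).

Definition hard_value (R : realType) (m : bool) (L H h : nat) (s : 'I_5) : R :=
  match val s with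
  | 0 => (H%:R - h%:R) / 2
  | 1 => if (h <= L)%N then (L%:R + 1 - h%:R) + (H%:R - 1 - L%:R) / 2
         else (H%:R - h%:R) / 2
  | 2 => if (h <= L)%N then (H%:R - 1 - L%:R) / 2 else (H%:R - h%:R) / 2
  | 3 => 0
  | _ => if h == 0%N then (if m then 1 + L%:R + (H%:R - 1 - L%:R) / 2 else H%:R / 2)
         else (H%:R - h%:R) / 2
  end.

Definition hard_gap (R : realType) (L : nat) : R := (L%:R + 1) / 2.

Lemma hard_gap_gt0 (R : realType) L : 0 < hard_gap R L.
Proof. by rewrite /hard_gap; have : 0 <= L%:R :> R by []; lra. Qed.

Lemma max_first_eq (R : realType) (x y z : R) :
  0 <= x -> y <= x -> x = z -> Num.max x (Num.max y 0) = z.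
Proof. by move=> x_ge0 y_le_x <-; apply/max_idPl; rewrite ge_max x_ge0 y_le_x. Qed.

Lemma max_second_eq (R : realType) (x y z : R) :
  0 <= y -> x <= y -> y = z -> Num.max x (Num.max y 0) = z.
Proof. by move=> y_ge0 x_le_y <-; rewrite (max_idPl y_ge0) (max_idPr x_le_y). Qed.

Ltac solve_max := first [apply: max_first_eq; lra | apply: max_second_eq; lra].
Ltac solve_gap := first [left; lra | right; lra].

Section HardInstance.
Variables (R : realType) (m : bool) (L : nat) (q : R).
Local Notation M := (hard_mdp m L q).

Lemma hard_mdp_is_mdp H : 0 <= q <= 1 -> is_mdp H M.
Proof.
move=> /andP [q_ge0 q_le1]; split.
- split; last by rewrite /= sum5 /hard_init /=; lra.
  by move=> s; rewrite /= /hard_init; case: ifP => _; [|case: ifP => _]; lra.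
- by move=> *; apply: dirac_dist.
- by move=> *; apply: dirac_dist.
- by move=> [[|[|[|?]]] Ho] //=; rewrite /reward_of /=; lra.
Qed.

Lemma rmean_hard h s x : rmean M h s x = reward_of R (hard_outcome m L h s x).
Proof. exact: sum_dirac_mul. Qed.

Lemma sum_trans_hard h s x (V : 'I_5 -> R) :
  \sum_s' trans M h s x s' * V s' = V (hard_next m L h s x).
Proof. exact: sum_dirac_mul. Qed.

Variable H : nat.
Hypothesis LH : (2 * L + 2 <= H)%N.

Lemma Vstar_hard n h s : (h + n = H)%N -> Vstar M n h s = hard_value R m L H h s.
Proof.
elim: n h s => [|n IHn] h s hn.
  rewrite addn0 in hn; subst h.
  have L_lt_H : (H <= L)%N = false by apply/negbTE; rewrite -ltnNge; lia.
  have H_neq0 : (H == 0%N) = false by apply/eqP; lia.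
  by case: s => [[|[|[|[|[|?]]]]] Hs] //=; rewrite /hard_value /= ?L_lt_H ?H_neq0 ?subrr ?mul0r.
rewrite /= bigmax2 !rmean_hard !sum_trans_hard !IHn ?addSnnS //.
have h_lt_H : (h%:R + 1 <= H%:R :> R) by rewrite natr1 ler_nat; lia.
have LH' : (2 * L%:R + 2 <= H%:R :> R) by rewrite -[2 * _]natrM -[_ + 2]natrD ler_nat.
have L_ge0 : (0 <= L%:R :> R) by [].
have h_ge0 : (0 <= h%:R :> R) by [].
rewrite /reward_of /hard_value /hard_next /hard_outcome -[h.+1%:R]natr1.
have [h_lt_L|L_lt_h|h_eq_L] := ltngtP h L.
- have h_le_L : (h <= L)%N by apply: ltnW.
  have h_lt_L' : (h%:R + 1 <= L%:R :> R) by rewrite natr1 ler_nat.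
  have L_neq0 : (L == 0%N) = false by apply/eqP; lia.
  case: s => [[|[|[|[|[|?]]]]] Hs] //=; rewrite ?h_le_L ?h_lt_L ?L_neq0 /=; try solve_max;
  by case: (h =P 0%N) => [h0|_] /=; [subst h; case: m => /=; rewrite ?h_lt_L|]; solve_max.
- have h_gt_L : (h <= L)%N = false by apply/negbTE; rewrite -ltnNge.
  have h_ge_L : (h < L)%N = false by apply/negbTE; rewrite -leqNgt ltnW.
  have h_neq0 : (h == 0%N) = false by apply/eqP; lia.
  have L_lt_h' : (L%:R + 1 <= h%:R :> R) by rewrite natr1 ler_nat.
  by case: s => [[|[|[|[|[|?]]]]] Hs] //=; rewrite ?h_gt_L ?h_ge_L ?h_neq0 /=; solve_max.
- subst h; case: s => [[|[|[|[|[|?]]]]] Hs] //=; rewrite ?leqnn ?ltnn /=; try solve_max;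
  by case: (L =P 0%N) => [e|_] /=; [rewrite e /= in h_lt_H LH' *; case: m => /=|]; solve_max.
Qed.

Lemma gap_hard h s x : (h < H)%N ->
  gap M H h s x = hard_value R m L H h s -
    (reward_of R (hard_outcome m L h s x) + hard_value R m L H h.+1 (hard_next m L h s x)).
Proof.
move=> hH; rewrite /gap /Qstar rmean_hard sum_trans_hard !Vstar_hard //; lia.
Qed.

Lemma gap_hard_dichotomy h s x : (h < H)%N ->
  gap M H h s x = 0 \/ hard_gap R L <= gap M H h s x.
Proof.
move=> hH; rewrite gap_hard //.
have h_lt_H : (h%:R + 1 <= H%:R :> R) by rewrite natr1 ler_nat; lia.
have LH' : (2 * L%:R + 2 <= H%:R :> R) by rewrite -[2 * _]natrM -[_ + 2]natrD ler_nat.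
have L_ge0 : (0 <= L%:R :> R) by [].
have h_ge0 : (0 <= h%:R :> R) by [].
rewrite /hard_gap /reward_of /hard_value /hard_next /hard_outcome -[h.+1%:R]natr1.
have [h_lt_L|L_lt_h|h_eq_L] := ltngtP h L.
- have h_le_L : (h <= L)%N by apply: ltnW.
  have h_lt_L' : (h%:R + 1 <= L%:R :> R) by rewrite natr1 ler_nat.
  have L_neq0 : (L == 0%N) = false by apply/eqP; lia.
  case: s => [[|[|[|[|[|?]]]]] Hs] //=; case: x => [[|[|?]] Hx] //=;
    rewrite ?h_le_L ?h_lt_L ?L_neq0 /=; try solve_gap;
  by case: (h =P 0%N) => [h0|_] /=; [subst h; case: m => /=; rewrite ?h_lt_L|]; solve_gap.
- have h_gt_L : (h <= L)%N = false by apply/negbTE; rewrite -ltnNge.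
  have h_ge_L : (h < L)%N = false by apply/negbTE; rewrite -leqNgt ltnW.
  have h_neq0 : (h == 0%N) = false by apply/eqP; lia.
  have L_lt_h' : (L%:R + 1 <= h%:R :> R) by rewrite natr1 ler_nat.
  by case: s => [[|[|[|[|[|?]]]]] Hs] //=; case: x => [[|[|?]] Hx] //=;
    rewrite ?h_gt_L ?h_ge_L ?h_neq0 /=; solve_gap.
- subst h; case: s => [[|[|[|[|[|?]]]]] Hs] //=; case: x => [[|[|?]] Hx] //=;
    rewrite ?leqnn ?ltnn /=; try solve_gap;
  by case: (L =P 0%N) => [e|_] /=; [rewrite e /= in h_lt_H LH' *; case: m => /=|]; solve_gap.
Qed.

Lemma gap_hard_root x :
  gap M H 0 s_root x = if (val x == 0%N) == m then 0 else hard_gap R L.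
Proof.
rewrite gap_hard; last lia.
have LH' : (2 * L%:R + 2 <= H%:R :> R) by rewrite -[2 * _]natrM -[_ + 2]natrD ler_nat.
have L_ge0 : (0 <= L%:R :> R) by [].
rewrite /hard_gap /reward_of /hard_value /hard_next /hard_outcome /=.
case: x => [[|[|?]] Hx] //=; case: (L =P 0%N) => [e|L_neq0] /=;
  try rewrite e /= in LH' *; case: m => /=; try lra;
  by rewrite (_ : (0 < L)%N) /=; [lra | lia].
Qed.

Lemma gap_hard_a1_neq0 h s : (h <= L)%N -> (val s <= 2)%N -> gap M H h s a1 != 0.
Proof.
move=> h_le_L s_le2; rewrite gap_hard; last lia.
have h_lt_H : (h%:R + 1 <= H%:R :> R) by rewrite natr1 ler_nat; lia.
have LH' : (2 * L%:R + 2 <= H%:R :> R) by rewrite -[2 * _]natrM -[_ + 2]natrD ler_nat.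
have h_le_L' : (h%:R <= L%:R :> R) by rewrite ler_nat.
have h_ge0 : (0 <= h%:R :> R) by [].
rewrite /reward_of /hard_value /hard_next /hard_outcome -[h.+1%:R]natr1.
move: s s_le2; apply: ord5P => //= _; rewrite ?h_le_L /=; apply/eqP;
  case: (ltngtP h L) h_le_L => // h_L _; try lra;
  by subst h; lra.
Qed.

Lemma is_min_gap_hard : is_min_gap H M (hard_gap R L).
Proof.
split.
  exists 0%N, s_root, (if m then a1 else a0); split; first lia.
  rewrite gap_hard_root; case: m => /=; split=> //; apply/eqP;
    rewrite /hard_gap; have : 0 <= L%:R :> R by []; lra.
move=> h s x hH; have [->|] // := gap_hard_dichotomy s x hH.
by rewrite eqxx.
Qed.

End HardInstance.

(* The pair [(s_root, a0)] that distinguishes the two instances is played with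
   probability [1/k] only, yet often enough to keep the density ratio with an
   optimal policy below [k]. *)
Definition hard_behavior (R : realType) (k : R) (L : nat) : policy R 'I_5 'I_2 :=
  fun h s x =>
    if (h == 0%N) && (val s == 4%N) then (if val x == 0%N then k^-1 else 1 - k^-1)
    else if (h <= L)%N && (val s <= 2)%N then (if val x == 0%N then 1 else 0)
    else 1 / 2.

Lemma invr_le_half (R : realType) (k : R) : 2 <= k -> 0 < k^-1 <= 1 / 2.
Proof.
move=> k_ge2; rewrite invr_gt0 (lt_le_trans _ k_ge2) //=.
by rewrite -[1 / 2]invf_div divr1 lef_pV2 ?posrE //; lra.
Qed.

Lemma hard_behavior_is_policy (R : realType) (k : R) L H :
  2 <= k -> is_policy H (hard_behavior k L).
Proof.
move=> /invr_le_half k_inv h _ s; split; last first.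
  by rewrite sum2 /hard_behavior /=; case: ifP => _; [|case: ifP => _]; lra.
move=> x; rewrite /hard_behavior.
by case: ifP => _; [case: ifP => _|case: ifP => _; [case: ifP => _|]]; lra.
Qed.

Section Occupancy.
Variables (R : realType) (m : bool) (L : nat) (q : R) (H : nat).
Local Notation M := (hard_mdp m L q).
Hypothesis LH : (2 * L + 2 <= H)%N.

Definition stays_on_chains (p : policy R 'I_5 'I_2) :=
  forall h s, (h <= L)%N -> (val s <= 2)%N -> p h s a1 = 0.

Definition hard_occupancy (b : R) (h : nat) (s : 'I_5) : R :=
  if h == 0%N then hard_init q s else
  if (h <= L)%N then
    match val s with
    | 0 => 1 - q * b
    | 1 => if m then q * b else 0
    | 2 => if m then 0 else q * b
    | _ => 0
    end
  else (val s == 0%N)%:R.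

Lemma stays_on_chains_a0 p h s : is_policy H p -> stays_on_chains p ->
  (h <= L)%N -> (h < H)%N -> (val s <= 2)%N -> p h s a0 = 1.
Proof.
move=> p_dist p_stays h_le_L hH s_le2.
by have [_] := p_dist h hH s; rewrite sum2 p_stays // addr0.
Qed.

Lemma hard_occupancy_step p h s : is_policy H p -> stays_on_chains p -> (h.+1 < H)%N ->
  \sum_s' \sum_a hard_occupancy (p 0%N s_root a0) h s' * p h s' a * trans M h s' a s
  = hard_occupancy (p 0%N s_root a0) h.+1 s.
Proof.
move=> p_dist p_stays hH; have hH' : (h < H)%N by apply: ltnW.
have p_a1 s' : p h s' a1 = 1 - p h s' a0.
  by have [_ <-] := p_dist h hH' s'; rewrite sum2 addrC addKr.
rewrite sum5 !sum2 !p_a1 /= /hard_next /hard_occupancy /dirac /=.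
have [h_le_L|h_gt_L] := leqP h L; last first.
  have h_neq0 : (h == 0%N) = false by rewrite (gtn_eqF (leq_ltn_trans (leq0n L) h_gt_L)).
  have h_nle_L : (h <= L)%N = false by rewrite leqNgt h_gt_L.
  have h_nlt_L : (h < L)%N = false by rewrite ltnNge ltnW.
  by move: s; apply: ord5P => /=; rewrite ?h_neq0 ?h_nle_L ?h_nlt_L /=;
    rewrite ?mul0r ?mulr0 ?mulr1 ?mul1r ?addr0 ?add0r; lra.
have [-> -> ->] : [/\ p h s_rest a0 = 1, p h s_good a0 = 1 & p h s_bad a0 = 1].
  by split; apply: stays_on_chains_a0.
rewrite !subrr.
case: (h =P 0%N) => [h0|_].
  subst h; rewrite /hard_init /=.
  case: (posnP L) => [_|L_gt0].
    by move: s; apply: ord5P => /=;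
      rewrite ?mul0r ?mulr0 ?mulr1 ?mul1r ?addr0 ?add0r; lra.
  by move: s; apply: ord5P => /=; case: m => /=;
    rewrite ?L_gt0 ?(gtn_eqF L_gt0) ?mul0r ?mulr0 ?mulr1 ?mul1r ?addr0 ?add0r; lra.
case: ltnP => [h_lt_L|h_ge_L]; move: s; apply: ord5P => /=; case: m => /=;
  rewrite ?h_le_L ?h_lt_L ?(leq_gtF h_ge_L) ?mul0r ?mulr0 ?mulr1 ?mul1r ?addr0 ?add0r; lra.
Qed.

Lemma socc_hard p : is_policy H p -> stays_on_chains p ->
  forall h, (h < H)%N -> forall s, socc M p h s = hard_occupancy (p 0%N s_root a0) h s.
Proof.
move=> p_dist p_stays; elim=> [|h IHh] hH s //=.
rewrite -hard_occupancy_step //; apply: eq_bigr => s' _; apply: eq_bigr => a _.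
by rewrite IHh // ltnW.
Qed.

Lemma hard_behavior_stays_on_chains k : stays_on_chains (hard_behavior k L).
Proof.
move=> h s h_le_L; rewrite /hard_behavior h_le_L.
by case: s => [[|[|[|?]]] Hs] //= _; rewrite andbF.
Qed.

Lemma optimal_stays_on_chains pi : 0 <= q <= 1 ->
  is_policy H pi -> is_optimal H M pi -> stays_on_chains pi.
Proof.
move=> q01 pi_dist pi_opt h s h_le_L s_le2.
apply: (optimal_policy_avoids_gap (hard_mdp_is_mdp m L H q01)) => //; first lia.
exact: gap_hard_a1_neq0.
Qed.

Lemma hard_visit_le k kap b pi h s x :
  0 <= q <= 1 -> 2 <= k -> k <= kap -> 0 <= b <= 1 ->
  is_policy H pi -> stays_on_chains pi -> (h < H)%N ->
  hard_occupancy b h s * pi h s x <=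
  kap * (hard_occupancy k^-1 h s * hard_behavior k L h s x).
Proof.
move=> /andP [q_ge0 q_le1] k_ge2 k_le_kap /andP [b_ge0 b_le1] pi_dist pi_stays hH.
have /andP [k_inv_gt0 k_inv_le] := invr_le_half k_ge2.
have kap_k : 1 <= kap * k^-1.
  by rewrite -(divff (x := k)) ?ler_wpM2r ?invr_ge0 //; [lra | apply/eqP; lra].
have kap_root : 1 <= kap * (1 - k^-1) by nra.
have kap_rest : 1 <= kap * (1 - q * k^-1) by nra.
have rest_le p : 0 <= p <= 1 -> (1 - q * b) * p <= kap * (1 - q / k).
  by move=> /andP [p_ge0 p_le1]; apply: le_trans kap_rest; apply: mulr_ile1 => //; nra.
have chain_le p : 0 <= p <= 1 -> q * b * p <= kap * (q / k).
  move=> /andP [p_ge0 p_le1]; apply: (@le_trans _ _ q).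
    by rewrite -mulrA ler_piMr // mulr_ile1.
  by rewrite mulrCA ler_peMr.
have /andP [pix_ge0 pix_le1] := dist_le1 x (pi_dist h hH s).
rewrite /hard_occupancy /hard_behavior.
have [h_le_L|h_gt_L] := leqP h L; last first.
  have h_nle_L : (h <= L)%N = false by rewrite leqNgt h_gt_L.
  rewrite (gtn_eqF (leq_ltn_trans (leq0n L) h_gt_L)) /=.
  by move: s x pix_ge0 pix_le1; apply: ord5P; apply: ord2P => //= *;
    rewrite ?h_nle_L ?mul0r ?mulr0 ?mul1r; lra.
have [stay_rest stay_good stay_bad] :
    [/\ pi h s_rest a1 = 0, pi h s_good a1 = 0 & pi h s_bad a1 = 0].
  by split; apply: pi_stays.
case: (h =P 0%N) => [h0|_].
  subst h; rewrite /hard_init.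
  by move: s x pix_ge0 pix_le1; apply: ord5P; apply: ord2P => //=;
    rewrite ?stay_rest ?stay_good ?stay_bad => *; rewrite ?mul0r ?mulr0 ?mulr1; nra.
by move: s x pix_ge0 pix_le1; apply: ord5P; apply: ord2P => //=;
  rewrite ?h_neq0 ?h_le_L ?stay_rest ?stay_good ?stay_bad /= => *;
  case: m => /=; rewrite ?mul0r ?mulr0 ?mulr1;
  first [apply: rest_le | apply: chain_le | lra]; lra.
Qed.

Lemma hard_concentrability k kappa pi : 0 <= q <= 1 -> 2 <= k ->
  (forall h, (h < H)%N -> k <= kappa h) -> is_policy H pi -> is_optimal H M pi ->
  forall h, (h < H)%N -> forall s x,
    visit M pi h s x <= kappa h * visit M (hard_behavior k L) h s x.
Proof.
move=> q01 k_ge2 kappa_ge pi_dist pi_opt h hH s x.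
have pi_stays := optimal_stays_on_chains q01 pi_dist pi_opt.
have mu_dist : is_policy H (hard_behavior k L) := hard_behavior_is_policy L k_ge2.
rewrite /visit (socc_hard pi_dist pi_stays) //.
rewrite (socc_hard mu_dist (hard_behavior_stays_on_chains k)) //.
rewrite (_ : hard_behavior k L 0 s_root a0 = k^-1) //.
apply: hard_visit_le => //; first exact: kappa_ge.
exact: dist_le1 (pi_dist 0%N (leq_ltn_trans (leq0n h) hH) s_root).
Qed.

End Occupancy.

Section HardPair.
Variables (R : realType) (L n : nat) (q : R).
Hypotheses (LH : (2 * L + 2 <= n.+1)%N) (q01 : 0 <= q <= 1).

Lemma SubOpt_hard_pair_ge pi : is_policy n.+1 pi ->
  q * hard_gap R L <= SubOpt n.+1 (hard_mdp true L q) pi + SubOpt n.+1 (hard_mdp false L q) pi.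
Proof.
move=> pi_dist.
have := SubOpt_ge_root_gap (hard_mdp_is_mdp true L n.+1 q01) s_root pi_dist isT.
have := SubOpt_ge_root_gap (hard_mdp_is_mdp false L n.+1 q01) s_root pi_dist isT.
rewrite !sum2 !gap_hard_root //= /hard_init /= !mulr0 !add0r !addr0.
have [_] := pi_dist 0%N isT s_root; rewrite sum2 => root_sum1.
have -> : q * hard_gap R L =
    q * (pi 0%N s_root a0 * hard_gap R L) + q * (pi 0%N s_root a1 * hard_gap R L).
  by rewrite -mulrDr -mulrDl root_sum1 mul1r.
lra.
Qed.

Lemma hard_outcome_indep h s x : ~~ [&& h == 0%N, s == s_root & x == a0] ->
  hard_outcome true L h s x = hard_outcome false L h s x.
Proof.
by move: s x; apply: ord5P; apply: ord2P => //=; rewrite /hard_outcome /=; case: (h == 0%N).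
Qed.

Lemma hard_next_indep h s x : ~~ [&& h == 0%N, s == s_root & x == a0] ->
  hard_next true L h s x = hard_next false L h s x.
Proof.
by move: s x; apply: ord5P; apply: ord2P => //=; rewrite /hard_next /=; case: (h == 0%N).
Qed.

Lemma traj_prob_hard_indep mu (tau : rawtraj n.+1 'I_5 'I_2 'I_3) :
  (tau ord0).1 != (s_root, a0) ->
  traj_prob (hard_mdp true L q) mu tau = traj_prob (hard_mdp false L q) mu tau.
Proof.
move=> tau0; rewrite !traj_probE; apply: eq_bigr => i _.
case: eqP => [i0|_].
  rewrite (_ : i = ord0); last exact: val_inj.
  move: tau0; case: (tau ord0) => [[s a] o] /= tau0.
  by rewrite /init_prob /= hard_outcome_indep.
rewrite /step_prob /= hard_outcome_indep //.
case: (i.-1 =P 0%N) => [i1|i1]; last by rewrite hard_next_indep // (negbTE (introN eqP i1)).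
rewrite (_ : prev_step i = ord0); last exact: val_inj.
rewrite hard_next_indep //; apply: contra tau0 => /and3P [_ /eqP s_eq /eqP a_eq].
by rewrite [(tau ord0).1]surjective_pairing s_eq a_eq.
Qed.

Lemma hidden_first_step_prob k : 2 <= k ->
  \sum_x ((x.1 != (s_root, a0))%:R * init_prob (hard_mdp true L q) (hard_behavior k L) x)
  = 1 - q * k^-1.
Proof.
move=> k_ge2.
rewrite (sum_pair (fun x : 'I_5 * 'I_2 * 'I_3 => _)) /=.
rewrite (sum_pair (fun sa : 'I_5 * 'I_2 => _)) /= sum5 !sum2.
have outcome_sum s x : \sum_o
    ((s, x) != (s_root, a0))%:R * init_prob (hard_mdp true L q) (hard_behavior k L) (s, x, o)
    = ((s, x) != (s_root, a0))%:R * hard_init q s * hard_behavior k L 0 s x.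
  rewrite /init_prob /=; under eq_bigr do rewrite mulrA.
  have [_ outcome_sum1] := dirac_dist R (hard_outcome true L 0 s x).
  by rewrite -mulr_sumr outcome_sum1 mulr1 !mulrA.
by rewrite !outcome_sum /hard_init /hard_behavior /=; lra.
Qed.

End HardPair.

Lemma half_ratio_in01 (R : realType) (k K : R) : 0 <= k <= K -> 0 <= k / (2 * K) <= 1.
Proof.
move=> /andP [k_ge0 k_le_K]; have [K0|K_gt0] := eqVneq K 0.
  by rewrite K0 mulr0 invr0 mulr0 lexx ler01.
apply/andP; split; first by apply: divr_ge0; lra.
rewrite ler_pdivrMr; lra.
Qed.

Lemma hard_pair_lower_bound (R : realType) n K L (q k : R) (Alg : algo R K n.+1) :
  valid_algo Alg -> (2 * L + 2 <= n.+1)%N -> 0 <= q <= 1 -> 2 <= k ->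
  q * hard_gap R L * (1 - q * k^-1) ^+ K <=
  expected_subopt Alg (hard_mdp true L q) (@tabular_features R _ _) (hard_behavior k L) +
  expected_subopt Alg (hard_mdp false L q) (@tabular_features R _ _) (hard_behavior k L).
Proof.
move=> Alg_valid LH q01 k_ge2.
rewrite -(hidden_first_step_prob L q k_ge2).
apply: two_point_lower_bound => //.
- exact: hard_mdp_is_mdp.
- exact: hard_mdp_is_mdp.
- exact: hard_behavior_is_policy.
- by move=> tau; apply: traj_prob_hard_indep.
- by move=> pi; apply: SubOpt_hard_pair_ge.
Qed.

Lemma hard_instance_lower_bound (R : realType) n K L (k : R) (Alg : algo R K n.+1) :
  valid_algo Alg -> (2 * L + 2 <= n.+1)%N -> 2 <= k -> k < K%:R ->
  exists m, k / (2 * K%:R) * hard_gap R L / 4 <=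
    expected_subopt Alg (hard_mdp m L (k / (2 * K%:R))) (@tabular_features R _ _)
      (hard_behavior k L).
Proof.
move=> Alg_valid LH k_ge2 k_lt_K.
have K_gt0 : 0 < K%:R :> R by lra.
set q := k / (2 * K%:R).
have q01 : 0 <= q <= 1 by apply: half_ratio_in01; lra.
have q_k : q * k^-1 = (2 * K%:R)^-1.
  by rewrite /q; field; apply/andP; split; apply/eqP; lra.
have gap_ge0 : 0 <= q * hard_gap R L.
  by apply: mulr_ge0; [case/andP: q01 | apply: ltW; apply: hard_gap_gt0].
have unrevealed : 1 / 2 <= (1 - q * k^-1) ^+ K.
  apply: le_trans (bernoulli_ineq _ _); rewrite q_k.
    by rewrite (_ : K%:R * _ = 1 / 2); [lra | field; apply/eqP; lra].
  by rewrite invr_ge0 invf_le1; lra.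
have sum_ge := hard_pair_lower_bound Alg_valid LH q01 k_ge2.
have half_le : q * hard_gap R L / 2 <= q * hard_gap R L * (1 - q * k^-1) ^+ K.
  by apply: ler_wpM2l => //; rewrite mul1r in unrevealed.
case: (lerP (q * hard_gap R L / 4) (expected_subopt Alg (hard_mdp true L q)
  (@tabular_features R _ _) (hard_behavior k L))) => [true_ge | true_lt].
  by exists true.
by exists false; lra.
Qed.

Lemma rate_le_quarter_gap (R : realType) (k Hr D K : R) :
  0 <= k -> 0 <= Hr <= 6 * D -> 0 < D -> 0 < K ->
  1 / 288 * k * Hr ^+ 2 / (K * D) <= k / (2 * K) * D / 4.
Proof.
move=> k_ge0 /andP [Hr_ge0 Hr_le] D_gt0 K_gt0.
rewrite ler_pdivrMr ?mulr_gt0 //.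
have -> : k / (2 * K) * D / 4 * (K * D) = k * D ^+ 2 / 8.
  by field; apply/eqP; lra.
have : Hr ^+ 2 <= 36 * D ^+ 2 by rewrite !expr2; nra.
nra.
Qed.

Lemma kappa_min_le (R : realType) H (kappa : nat -> R) h :
  (h < H)%N -> kappa_min H kappa <= kappa h.
Proof. by move=> hH; apply: (bigmin_le _ (Ordinal hH)). Qed.

Lemma kappa_min_ge (R : realType) H (kappa : nat -> R) c : (0 < H)%N ->
  (forall h, (h < H)%N -> c <= kappa h) -> c <= kappa_min H kappa.
Proof.
move=> H_gt0 c_le; rewrite /kappa_min; elim/big_ind: _ => [|x y cx cy|i _].
- exact: c_le.
- by rewrite le_min cx cy.
- exact: c_le.
Qed.

Lemma natr_le_6_hard_gap (R : realType) H L : (H <= 3 * (L + 1))%N -> H%:R <= 6 * hard_gap R L.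
Proof.
move=> HL; have : H%:R <= (3 * (L + 1))%:R :> R by rewrite ler_nat.
by rewrite natrM natrD /hard_gap; lra.
Qed.

Unset Implicit Arguments.

Theorem theorem3 (R : realType) :
  exists c : R, 0 < c /\
  forall H : nat, (2 <= H)%N ->
  forall kappa : nat -> R, (forall h, (h < H)%N -> 2 <= kappa h) ->
  exists K0 : nat, forall K : nat, (K0 <= K)%N ->
  forall Alg : algo R K H, valid_algo Alg ->
  exists (nS nA nO d : nat) (M : mdp R 'I_nS 'I_nA 'I_nO)
         (phi : nat -> 'I_nS -> 'I_nA -> 'rV[R]_d)
         (mu : policy R 'I_nS 'I_nA) (Dmin : R),
    [/\ is_linear_mdp H M phi /\ is_policy H mu,
        (forall pi : policy R 'I_nS 'I_nA, is_policy H pi -> is_optimal H M pi ->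
           forall h, (h < H)%N -> forall s a,
             visit M pi h s a <= kappa h * visit M mu h s a),
        0 < Dmin,
        is_min_gap H M Dmin &
        c * kappa_min H kappa * (H%:R ^+ 2) / (K%:R * Dmin)
          <= expected_subopt Alg M phi mu].
Proof.
exists (1 / 288); split; first lra.
case=> [|[|n]] // _ kappa kappa_ge2.
set k := kappa_min n.+2 kappa.
have k_ge2 : 2 <= k by apply: kappa_min_ge.
exists (Num.trunc k).+1 => K K_gt_k Alg Alg_valid.
have k_lt_K : k < K%:R by apply: lt_le_trans (truncnS_gt k) _; rewrite ler_nat.
set L := (n %/ 2)%N.
have LH : (2 * L + 2 <= n.+2)%N by rewrite /L; lia.
have [m lower] := hard_instance_lower_bound Alg_valid LH k_ge2 k_lt_K.
have q01 : 0 <= k / (2 * K%:R) <= 1 by apply: half_ratio_in01; lra.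
exists 5%N, 2%N, 3%N, _, (hard_mdp m L (k / (2 * K%:R))), (@tabular_features R _ _),
  (hard_behavior k L), (hard_gap R L); split.
- split; [apply: tabular_linear_mdp; exact: hard_mdp_is_mdp | exact: hard_behavior_is_policy].
- by move=> pi pi_dist pi_opt; apply: hard_concentrability => // h hH; apply: kappa_min_le.
- exact: hard_gap_gt0.
- exact: is_min_gap_hard.
apply: le_trans lower; apply: rate_le_quarter_gap; [lra | | exact: hard_gap_gt0 | lra].
by rewrite ler0n natr_le_6_hard_gap // /L; lia.
Qed.
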